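(* Let $T$ be a TCD map on a BTB graph $G$, and let $\tilde T$ be obtained from $T$ by a resplit at $w_0$, with notation $w_0,w_1,w_2,w_3,w_4,\tilde w_0$ as in the context. Then $$\mathrm{mr}\bigl(T(w_1),T(w_0),T(w_2),T(w_3),\tilde T(\tilde w_0),T(w_4)\bigr)=-1.$$
   Context: A BTB graph is a planar bipartite graph (black $B$, white $W$) in a disk or cactus with all black vertices of degree $3$. A TCD map is $T:W\to\mathbb{CP}^d$ such that the neighbours of each black vertex have pairwise distinct collinear images. Resplit. Let $w_0$ be an internal white vertex of degree $2$ with black neighbours $b$ (other neighbours $w_1,w_2$) and $b'$ (other neighbours $w_3,w_4$), labelled so that $w_1,w_4$ lie on one face containing $b,w_0,b'$ and $w_2,w_3$ on the other. The resplit replaces $w_0,b,b'$ by a white vertex $\tilde w_0$ and black vertices adjacent to $\{\tilde w_0,w_1,w_4\}$ and $\{\tilde w_0,w_2,w_3\}$. Choose lifts $V(w)$ of the points and write the collinearity relations as $V(w_0)=\alpha_1V(w_1)+\alpha_2V(w_2)=\alpha_3V(w_3)+\alpha_4V(w_4)$. Then $\tilde T(\tilde w_0)=[\alpha_1V(w_1)-\alpha_4V(w_4)]=[\alpha_3V(w_3)-\alpha_2V(w_2)]$, and all other points are unchanged. The move is assumed defined, i.e. $T(w_1)\ne T(w_4)$ and $T(w_2)\ne T(w_3)$. Multi-ratio: for points $P_1,P_{1,2},P_2,P_{2,3},P_3,P_{3,1}$ with $P_{i,i+1}$ on line $P_iP_{i+1}$, $\mathrm{mr}=\prod_{i=1}^3(P_i-P_{i,i+1})/(P_{i,i+1}-P_{i+1})$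 (indices mod $3$), computed in any affine chart containing all points. *)

From HB Require Import structures.
From mathcomp Require Import all_boot all_order all_algebra.
From mathcomp Require Import reals.
From mathcomp.real_closed Require Import complex.
Set Implicit Arguments. Unset Strict Implicit. Unset Printing Implicit Defensive.
Import Order.TTheory GRing.Theory Num.Theory.
Local Open Scope ring_scope.

Section Defs.
Variable F : fieldType.
Variable n : nat.

(* Points of the projective space P(F^n) are represented by nonzero lifts
   u : 'rV[F]_n.  Two lifts represent distinct projective points iff they
   are linearly independent. *)
Definition proj_neq (u v : 'rV[F]_n) : bool := \rank (col_mx u v) == 2%N.

(* An affine chart is the complement of the hyperplane {phi = 0}, phi a
   nonzero linear form given by the column vector f. *)
Definition lform (f : 'cV[F]_n) (u : 'rV[F]_n) : F := (u *m f) 0 0.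
Definition in_chart (f : 'cV[F]_n) (u : 'rV[F]_n) : bool := lform f u != 0.
Definition aff (f : 'cV[F]_n) (u : 'rV[F]_n) : 'rV[F]_n := (lform f u)^-1 *: u.

(* The ratio (a - b)/(b - c) of three collinear affine points with b != c:
   the scalar lambda with a - b = lambda (b - c), read off in any coordinate
   where b - c is nonzero. *)
Definition aratio (a b c : 'rV[F]_n) : F :=
  if [pick i | b 0 i != c 0 i] is Some i
  then (a 0 i - b 0 i) / (b 0 i - c 0 i) else 0.

Definition multiratio (f : 'cV[F]_n) (P1 P12 P2 P23 P3 P31 : 'rV[F]_n) : F :=
  aratio (aff f P1) (aff f P12) (aff f P2) *
  aratio (aff f P2) (aff f P23) (aff f P3) *
  aratio (aff f P3) (aff f P31) (aff f P1).
End Defs.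

From HB Require Import structures.
From mathcomp Require Import all_boot all_order all_algebra.
From mathcomp Require Import reals.
From mathcomp.real_closed Require Import complex.
From mathcomp Require Import ring.
Set Implicit Arguments. Unset Strict Implicit.
Import Order.TTheory GRing.Theory Num.Theory.
Local Open Scope ring_scope.

(* Normalising lifts in the chart phi turns a linear relation
   x u + y w + z v = 0 into the affine relation p A + q B + r C = 0 with
   p = x phi(u), q = y phi(w), r = z phi(v), and p + q + r = 0; hence
   (A - B)/(B - C) = r/p.  The three triples of the multi-ratio satisfy
   V0 = a1 V1 + a2 V2,  Vt = a3 V3 - a2 V2  and  Vt = a1 V1 - a4 V4, so the three
   ratios are  a2 phi(V2)/(a1 phi(V1)),  phi(Vt)/(a2 phi(V2))  and
   -a1 phi(V1)/phi(Vt), whose product is -1. *)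

Section ProjectivePoints.
Variables (F : fieldType) (n : nat).
Implicit Types (u v w : 'rV[F]_n) (s x y z : F).

Lemma proj_neqC u v : proj_neq u v = proj_neq v u.
Proof. by rewrite /proj_neq -!addsmxE addsmxC. Qed.

Lemma proj_neq_scaler u v s : proj_neq u v -> u != s *: v.
Proof.
move=> /eqP rank_uv; apply/eqP => def_u.
suff : (\rank (col_mx u v) <= 1)%N by rewrite rank_uv.
apply: leq_trans (rank_leq_row v); apply: mxrankS.
by rewrite col_mx_sub def_u scalemx_sub submx_refl.
Qed.

Lemma proj_neq_collinear u w v x y z :
  x *: u + y *: w + z *: v = 0 -> x != 0 -> proj_neq u w -> proj_neq w v.
Proof.
rewrite -addrA => rel x_neq0 /eqP rank_uw.
rewrite /proj_neq eqn_leq rank_leq_row -rank_uw mxrankS // -!addsmxE.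
rewrite addsmx_sub addsmxSl andbT -(eqmx_scale _ x_neq0).
have /eqP -> : x *: u == - (y *: w + z *: v) by rewrite -addr_eq0 rel.
by rewrite eqmx_opp addmx_sub ?scalemx_sub ?addsmxSl ?addsmxSr.
Qed.

End ProjectivePoints.

Section AffineRatio.
Variables (F : fieldType) (n : nat).
Implicit Types (A B C : 'rV[F]_n) (p q r : F).

Lemma aratio_relation A B C p q r :
  p + q + r = 0 -> p *: A + q *: B + r *: C = 0 -> p != 0 -> B != C ->
  aratio A B C = r / p.
Proof.
move=> pqr rel p_neq0 neq_BC.
have q_def : q = - (p + r) by apply/eqP; rewrite -addr_eq0 addrC addrAC pqr.
have coordE i : p * (A 0 i - B 0 i) = r * (B 0 i - C 0 i).
  have /rowP/(_ i) := rel; rewrite !mxE q_def => relE.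
  by apply/eqP; rewrite -subr_eq0 -relE; apply/eqP; ring.
rewrite /aratio; case: pickP => [i neq_BCi | eq_BC]; last first.
  by case/eqP: neq_BC; apply/rowP => i; apply/eqP/negbFE/eq_BC.
by rewrite -[A 0 i - _](mulKf p_neq0) coordE mulrA mulfK ?subr_eq0 // mulrC.
Qed.

End AffineRatio.

Section AffineChart.
Variables (F : fieldType) (n : nat) (f : 'cV[F]_n).
Implicit Types (u v w : 'rV[F]_n) (s x y z : F).

Lemma lform0 : lform f 0 = 0.
Proof. by rewrite /lform mul0mx mxE. Qed.

Lemma lformD u v : lform f (u + v) = lform f u + lform f v.
Proof. by rewrite /lform mulmxDl mxE. Qed.

Lemma lformZ s u : lform f (s *: u) = s * lform f u.
Proof. by rewrite /lform -scalemxAl mxE. Qed.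

Lemma scale_aff u : in_chart f u -> lform f u *: aff f u = u.
Proof. by move=> chart_u; rewrite /aff scalerA mulfV ?scale1r. Qed.

Lemma aff_neq u v : in_chart f u -> proj_neq u v -> aff f u != aff f v.
Proof.
move=> chart_u /(proj_neq_scaler (lform f u / lform f v)).
by apply: contraNneq => eq_aff; rewrite -{1}(scale_aff chart_u) eq_aff scalerA.
Qed.

Lemma aratio_aff u w v x y z :
  x *: u + y *: w + z *: v = 0 -> x != 0 -> proj_neq w v ->
  in_chart f u -> in_chart f w -> in_chart f v ->
  aratio (aff f u) (aff f w) (aff f v) = z * lform f v / (x * lform f u).
Proof.
move=> rel x_neq0 neq_wv chart_u chart_w chart_v.
apply: (aratio_relation (q := y * lform f w)).
- by rewrite -!lformZ -!lformD rel lform0.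
- by rewrite -!scalerA !scale_aff.
- exact: mulf_neq0.
- exact: aff_neq.
Qed.

End AffineChart.

Theorem proposition5p5 (R : realType) (d : nat)
    (V0 V1 V2 V3 V4 : 'rV[R[i]]_d.+1) (a1 a2 a3 a4 : R[i]) :
  (* TCD conditions at b = {w0,w1,w2} and b' = {w0,w3,w4}:
     pairwise distinct images (the lifts are then nonzero) ... *)
  proj_neq V0 V1 -> proj_neq V0 V2 -> proj_neq V1 V2 ->
  proj_neq V0 V3 -> proj_neq V0 V4 -> proj_neq V3 V4 ->
  (* ... and collinear, with the chosen relations *)
  V0 = a1 *: V1 + a2 *: V2 -> V0 = a3 *: V3 + a4 *: V4 ->
  (* the resplit is defined *)
  proj_neq V1 V4 -> proj_neq V2 V3 ->
  (* lift of tilde T(tilde w0) = [a1 V1 - a4 V4] *)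
  let Vt := a1 *: V1 - a4 *: V4 in
  forall f : 'cV[R[i]]_d.+1,
    [/\ in_chart f V0, in_chart f V1, in_chart f V2 &
        [/\ in_chart f V3, in_chart f V4 & in_chart f Vt]] ->
    multiratio f V1 V0 V2 V3 Vt V4 = -1.
Proof.
move=> n01 n02 _ _ _ _ E1 E2 n14 n23 Vt f [c0 c1 c2 [c3 c4 ct]].
have a1_neq0 : a1 != 0.
  by apply: contraNneq (proj_neq_scaler a2 n02) => a1_0; rewrite E1 a1_0 scale0r add0r.
have a2_neq0 : a2 != 0.
  by apply: contraNneq (proj_neq_scaler a1 n01) => a2_0; rewrite E1 a2_0 scale0r addr0.
have rel1 : a1 *: V1 + (-1) *: V0 + a2 *: V2 = 0.
  by rewrite E1; apply/rowP => i; rewrite !mxE; ring.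
have rel2 : a2 *: V2 + (- a3) *: V3 + 1 *: Vt = 0.
  by rewrite -(subrr V0) {1}E1 E2; apply/rowP => i; rewrite !mxE; ring.
have rel3 : 1 *: Vt + a4 *: V4 + (- a1) *: V1 = 0.
  by apply/rowP => i; rewrite !mxE; ring.
have n3t : proj_neq V3 Vt := proj_neq_collinear rel2 a2_neq0 n23.
rewrite /multiratio (aratio_aff rel1) // (aratio_aff rel2) //.
rewrite (aratio_aff rel3) ?oner_neq0 1?proj_neqC //.
by field; apply/and5P.
Qed.
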